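(* In the weighted kidney exchange game (W-KEG), even with two players, a player can have a strict incentive to hide vertices: there exists a 2-player W-KEG instance in which the independent agent has a unique optimal matching and one player's utility strictly increases when she removes one of her vertices (with its incident edges) from the game.
   Context: W-KEG: players $N=\{1,\dots,n\}$; player $p$ has internal graph $G^p=(V^p,E^p)$ (pairwise disjoint vertex sets); $E^I$ is a set of external edges each joining vertices of two different players; $E^I_p$ is the set of external edges incident to $V^p$. Each player $p$ has nonnegative weights $w^p_e$ on $E^p\cup E^I_p$. A strategy of player $p$ is a matching $M^p$ of $G^p$. The independent agent selects a maximum-weight matching $M^I$ of the external edges whose endpoints are uncovered by $\bigcup_pM^p$, where an external edge $(v,u)$ with $v\in V^i$, $u\in V^j$ has weight $w^I_{vu}=w^i_{vu}+w^j_{vu}$. With $M^I_p$ the edges of $M^I$ incident to $V^p$, player $p$'s utility is $\sum_{e\in M^p}w^p_e+\sum_{e\in M^I_p}w^p_e$. *)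

From HB Require Import structures.
From mathcomp Require Import all_boot all_order all_algebra.
Set Implicit Arguments. Unset Strict Implicit. Unset Printing Implicit Defensive.
Import Order.TTheory GRing.Theory Num.Theory.
Local Open Scope ring_scope.

(* Edges are unordered pairs, represented as 2-element sets of vertices.
   [edges] is the set of all edges (internal and external);
   [weight p e] is player p's weight w^p_e.
   The vertex set of the game is given separately as an "active" set
   A : {set V}; only edges contained in A are present in the game. *)
Record keg (n : nat) (V : finType) := KEG {
  owner : V -> 'I_n;
  edges : {set {set V}};
  weight : 'I_n -> {set V} -> rat }.

Section KEG.
Variables (n : nat) (V : finType) (G : keg n V).

Definition edges_in (A : {set V}) : {set {set V}} :=
  [set e in edges G | e \subset A].

Definition internal (p : 'I_n) (e : {set V}) : bool :=
  [forall x in e, owner G x == p].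

Definition external (e : {set V}) : bool := ~~ [exists p, internal p e].

Definition incident (p : 'I_n) (e : {set V}) : bool :=
  [exists x in e, owner G x == p].

Definition wf_keg : Prop :=
  (forall e, e \in edges G -> #|e| = 2%N) /\
  (forall p e, e \in edges G ->
     internal p e || (external e && incident p e) -> 0 <= weight G p e).

Definition matching (M : {set {set V}}) : Prop :=
  forall e f, e \in M -> f \in M -> e != f -> [disjoint e & f].

Definition strategy (A : {set V}) (p : 'I_n) (M : {set {set V}}) : Prop :=
  M \subset [set e in edges_in A | internal p e] /\ matching M.

Definition profile := 'I_n -> {set {set V}}.

Definition is_profile (A : {set V}) (S : profile) : Prop :=
  forall p, strategy A p (S p).

Definition covered (S : profile) : {set V} :=
  \bigcup_(p < n) \bigcup_(e in S p) e.

Definition ia_feasible (A : {set V}) (S : profile) (M : {set {set V}}) : Prop :=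
  [/\ M \subset [set e in edges_in A | external e], matching M &
      forall e, e \in M -> [disjoint e & covered S]].

Definition ia_weight (e : {set V}) : rat :=
  \sum_(p < n | incident p e) weight G p e.

Definition ia_value (M : {set {set V}}) : rat := \sum_(e in M) ia_weight e.

Definition ia_optimal (A : {set V}) (S : profile) (M : {set {set V}}) : Prop :=
  ia_feasible A S M /\
  forall M', ia_feasible A S M' -> ia_value M' <= ia_value M.

Definition ia_unique_optimal (A : {set V}) (S : profile) : Prop :=
  exists M, ia_optimal A S M /\ forall M', ia_optimal A S M' -> M' = M.

Definition utility (p : 'I_n) (S : profile) (MI : {set {set V}}) : rat :=
  \sum_(e in S p) weight G p e + \sum_(e in MI | incident p e) weight G p e.

End KEG.

From mathcomp Require Import all_boot all_order all_algebra.
Import Order.TTheory GRing.Theory Num.Theory.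
Local Open Scope ring_scope.
Set Implicit Arguments.

(* Player 0 owns a and v, player 1 owns b, and the only edges are ab and vb,
   both external and sharing b; so every strategy is empty and the agent
   matches at most one of them.  Player 1 values vb at 2 while player 0 values
   only ab, at 1: the agent picks vb and player 0 gets nothing.  Once v is
   hidden only ab remains, and player 0 gets 1. *)

Section Game.
Variables (n : nat) (V : finType) (G : keg n V).

Lemma external_of_owners x y (e : {set V}) :
  x \in e -> y \in e -> owner G x != owner G y -> external G e.
Proof.
move=> xe ye; apply: contra => /existsP[p /forall_inP int_e].
by rewrite (eqP (int_e x xe)) (eqP (int_e y ye)).
Qed.

Lemma incident_owner x (e : {set V}) : x \in e -> incident G (owner G x) e.
Proof. by move=> xe; apply/existsP; exists x; rewrite xe /=. Qed.

Lemma utility_set1 p (S : profile n V) (e : {set V}) :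
  S p = set0 -> incident G p e -> utility G p S [set e] = weight G p e.
Proof.
move=> Sp0 pe; rewrite /utility Sp0 big_set0 add0r.
rewrite (eq_bigl (mem [set e])) => [|f]; first exact: big_set1.
by rewrite !inE; case: eqP => [->|].
Qed.

Lemma strict_ia_optimum A (S : profile n V) M0 :
  ia_feasible G A S M0 ->
  (forall M, ia_feasible G A S M -> M != M0 -> ia_value G M < ia_value G M0) ->
  ia_optimal G A S M0 /\ forall M, ia_optimal G A S M -> M = M0.
Proof.
move=> feas0 lt0; split.
  split=> // M feasM; have [->|neqM] := eqVneq M M0; first exact: lexx.
  exact/ltW/lt0.
move=> M [feasM maxM]; apply/eqP; apply: contraT => neqM.
by have := maxM _ feas0; rewrite leNgt lt0.
Qed.

Section AllExternal.
Hypothesis all_external : {in edges G, forall e, external G e}.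

Lemma profile_eq0 A (S : profile n V) p : is_profile G A S -> S p = set0.
Proof.
move=> /(_ p) [sub_int _]; apply/setP => e; rewrite inE.
apply/negbTE/negP => /(subsetP sub_int); rewrite !inE => /andP[/andP[eG _]].
by have /existsPn/(_ p)/negbTE-> := all_external eG.
Qed.

Lemma covered_eq0 A (S : profile n V) : is_profile G A S -> covered S = set0.
Proof.
move=> profS; rewrite /covered big1 // => p _.
by rewrite (profile_eq0 p profS) big_set0.
Qed.

Lemma ia_feasible_set1 A (S : profile n V) (e : {set V}) :
  is_profile G A S -> e \in edges G -> e \subset A -> ia_feasible G A S [set e].
Proof.
move=> profS eG eA; split.
- by rewrite sub1set !inE eG eA all_external.
- by move=> f g; rewrite !inE => /eqP-> /eqP->; rewrite eqxx.
- by move=> f _; rewrite (covered_eq0 profS) -setI_eq0 setI0.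
Qed.

End AllExternal.
End Game.

Lemma matching_sub_pair (V : finType) (e f : {set V}) (M : {set {set V}}) :
  M \subset [set e; f] -> e != f -> ~~ [disjoint e & f] -> matching M ->
  [\/ M = set0, M = [set e] | M = [set f]].
Proof.
move=> subM neq_ef meet_ef matchM.
have [eM|eNM] := boolP (e \in M).
  have fNM : f \notin M by apply: contra meet_ef => fM; exact: matchM.
  have : M \subset [set e].
    apply/subsetP => g gM; move: (subsetP subM g gM); rewrite !inE.
    by case/orP=> // /eqP gf; rewrite -gf gM in fNM.
  by rewrite subset1 => /orP[/eqP->|/eqP M0]; [constructor 2 | rewrite M0 inE in eM].
have : M \subset [set f].
  apply/subsetP => g gM; move: (subsetP subM g gM); rewrite !inE.
  by case/orP=> // /eqP ge; rewrite -ge gM in eNM.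
by rewrite subset1 => /orP[/eqP->|/eqP->]; [constructor 3 | constructor 1].
Qed.

Definition a : 'I_3 := @Ordinal 3 0 isT.
Definition v : 'I_3 := @Ordinal 3 1 isT.
Definition b : 'I_3 := @Ordinal 3 2 isT.
Definition ab : {set 'I_3} := [set a; b].
Definition vb : {set 'I_3} := [set v; b].

Definition hiding_game : keg 2 'I_3 :=
  KEG (fun x => if x == b then ord_max else ord0) [set ab; vb]
    (fun p e => if p == ord0 then (v \notin e)%:R else (v \in e)%:R *+ 2).

Local Notation G := hiding_game.

Lemma ab_neq_vb : ab != vb.
Proof. by apply/eqP => /setP /(_ a); rewrite !inE. Qed.

Lemma ab_meets_vb : ~~ [disjoint ab & vb].
Proof. by apply/pred0Pn; exists b; rewrite /= !inE eqxx orbT. Qed.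

Lemma hiding_game_external : {in edges G, forall e, external G e}.
Proof.
move=> e; rewrite !inE => /orP[]/eqP->.
  by apply: (@external_of_owners _ _ _ a b); rewrite ?inE ?eqxx ?orbT.
by apply: (@external_of_owners _ _ _ v b); rewrite ?inE ?eqxx ?orbT.
Qed.

Lemma hiding_incident p e : e \in edges G -> incident G p e.
Proof.
have [-> | ->] : p = ord0 \/ p = ord_max.
  by case: p => -[|[|//]] ?; [left | right]; apply: val_inj.
  rewrite !inE => /orP[]/eqP->.
    by apply: (@incident_owner _ _ G a); rewrite !inE eqxx.
  by apply: (@incident_owner _ _ G v); rewrite !inE eqxx.
by rewrite !inE => /orP[]/eqP->; apply: (@incident_owner _ _ G b); rewrite !inE eqxx orbT.
Qed.

Lemma ia_weight_hiding e : e \in edges G ->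
  ia_weight G e = weight G ord0 e + weight G ord_max e.
Proof.
move=> eG; rewrite /ia_weight (eq_bigl xpredT) => [|p]; last exact: hiding_incident.
by rewrite big_ord_recl big_ord1; congr (_ + _); congr (weight _ _ _); apply: val_inj.
Qed.

Lemma vb_notin_hidden : vb \notin edges_in G [set~ v].
Proof. by rewrite inE; apply/nandP; right; apply/subsetPn; exists v; rewrite !inE ?eqxx. Qed.

Lemma ia_value_ab : ia_value G [set ab] = 1.
Proof. by rewrite /ia_value big_set1 ia_weight_hiding ?inE ?eqxx //= !inE. Qed.

Lemma ia_value_vb : ia_value G [set vb] = 2%:R.
Proof. by rewrite /ia_value big_set1 ia_weight_hiding ?inE ?eqxx ?orbT //= !inE. Qed.

Lemma ia_feasible_hiding A S M : ia_feasible G A S M ->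
  [\/ M = set0, M = [set ab] | M = [set vb]].
Proof.
case=> subM matchM _; apply: matching_sub_pair ab_neq_vb ab_meets_vb matchM.
by apply/subsetP => e /(subsetP subM); rewrite !inE => /andP[/andP[]].
Qed.

Lemma ia_optimum_full S : is_profile G setT S ->
  ia_optimal G setT S [set vb] /\ forall M, ia_optimal G setT S M -> M = [set vb].
Proof.
move=> profS; apply: strict_ia_optimum => [|M feasM].
  apply: (ia_feasible_set1 hiding_game_external profS); last exact: subsetT.
  by rewrite !inE eqxx orbT.
case: (ia_feasible_hiding feasM) => ->; rewrite ?eqxx // => _.
  by rewrite ia_value_vb /ia_value big_set0.
by rewrite ia_value_ab ia_value_vb.
Qed.

Lemma ia_optimum_hidden S : is_profile G [set~ v] S ->
  ia_optimal G [set~ v] S [set ab] /\ forall M, ia_optimal G [set~ v] S M -> M = [set ab].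
Proof.
move=> profS; apply: strict_ia_optimum => [|M feasM].
  apply: (ia_feasible_set1 hiding_game_external profS); first by rewrite !inE eqxx.
  by apply/subsetP => x; rewrite !inE => /orP[]/eqP->.
have vbNM : vb \notin M.
  apply: contra vb_notin_hidden; case: feasM => subM _ _.
  by move=> /(subsetP subM); rewrite inE => /andP[].
case: (ia_feasible_hiding feasM) vbNM => ->; rewrite ?eqxx ?inE ?eqxx // => _ _.
by rewrite ia_value_ab /ia_value big_set0.
Qed.

Theorem lemma2 :
  exists (V : finType) (G : keg 2 V) (p : 'I_2) (v : V),
    [/\ wf_keg G, owner G v = p,
        forall S, is_profile G [set: V] S -> ia_unique_optimal G [set: V] S,
        forall S, is_profile G [set~ v] S -> ia_unique_optimal G [set~ v] S &
        forall S MI S' MI',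
          is_profile G [set: V] S -> ia_optimal G [set: V] S MI ->
          is_profile G [set~ v] S' -> ia_optimal G [set~ v] S' MI' ->
          utility G p S MI < utility G p S' MI'].
Proof.
exists 'I_3, hiding_game, ord0, v; split => //.
- split=> [e|p e _ _].
    by rewrite !inE => /orP[]/eqP->; rewrite cards2.
  by rewrite /=; case: ifP => _; [exact: ler0n | exact/mulrn_wge0/ler0n].
- by move=> S /ia_optimum_full; exists [set vb].
- by move=> S /ia_optimum_hidden; exists [set ab].
move=> S MI S' MI' profS optMI profS' optMI'.
rewrite ((ia_optimum_full profS).2 _ optMI) ((ia_optimum_hidden profS').2 _ optMI').
rewrite !utility_set1 ?(profile_eq0 hiding_game_external _ profS)
        ?(profile_eq0 hiding_game_external _ profS') ?hiding_incident ?inE ?eqxx ?orbT //.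
by rewrite /= !inE.
Qed.
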